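(* Consider the scheduling policy SIS, with ties broken arbitrarily, with a transmission oracle in $TO_h$ and proactive hearing control $P$, against an adversary $\mathcal{A}(b,r)$ with $0\le r<1/h$. Define $k_1=b$ and $k_{i+1}=\frac{k_i+b}{1-rh}$. When a packet $p$ arrives at the $i$-th queue $v_i$ on its path, then there are at most $k_i-1$ packets requiring any queue in the path of $p$ (i.e., for each node on the path of $p$, at most $k_i-1$ packets in the system that still have to pass through that node) with a priority higher than that of $p$.
   Context: Multi-hop radio network model: a network is a simple graph with $n$ nodes; time is divided into synchronous rounds. Packets are injected by an adversary, each with its complete path fixed at injection. Each node keeps a single, unbounded queue of packets to be forwarded. In each round a node transmits at most one message; a node $w$ hears a message of a neighbor $u$ in a round iff $u$ is the only neighbor of $w$ transmitting in that round. When $v$ transmits a packet whose next node on its path is $w$ and $w$ hears it, the packet leaves $v$ and is absorbed at $w$ or appended to $w$'s queue. A transmission oracle tells each node in each round whether to transmit. Proactive hearing control $P$: in a round in which the oracle tells $v$ to transmit, $v$ first learns which neighbors would hear its transmission, and the scheduling policy selects a packet among the queued packets whose next node is one of these neighbors (if any), which is then transmitted and heard. A directed link $(u,w)$ is up in a round if a packet transmitted by $u$ to $w$ would be heard by $w$; $TO_h$ is the class of transmission oracles under which every link is up at least once in every $h$ consecutive rounds. An adversary $\mathcal{A}(b,r)$ ($b$ positive integer, $0\le r\le1$) specifies each injected packet's path and satisfies: for every interval $\tau$ of consecutive rounds and every node $v$, the number of packets injected during $\tau$ whose path contains $v$ is at most $r|\tau|+b$. SIS (Shortest-In-System) gives priority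 to the packet that has been in the system for the shortest time. *)

From HB Require Import structures.
From mathcomp Require Import all_boot all_order all_algebra.
Set Implicit Arguments. Unset Strict Implicit. Unset Printing Implicit Defensive.
Import Order.TTheory GRing.Theory Num.Theory.

Local Open Scope nat_scope.

(* The adversary's injection pattern is  A : nat -> seq (seq T) :
   A s is the list of paths of the packets injected in round s.
   A packet is identified by (s, j) with j < size (A s). *)
Definition pkt := (nat * nat)%type.

Section Model.
Variable T : finType.

Definition pinj (q : pkt) : nat := q.1.
Definition ppath (A : nat -> seq (seq T)) (q : pkt) : seq T := nth [::] (A q.1) q.2.
Definition valid (A : nat -> seq (seq T)) (q : pkt) : bool := q.2 < size (A q.1).
(* index (0-based) of the destination on the path; indices < last_idx are queues *)
Definition last_idx A (q : pkt) : nat := (size (ppath A q)).-1.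

Definition simple_graph (adj : rel T) : Prop := symmetric adj /\ irreflexive adj.

Definition is_route (adj : rel T) (s : seq T) : bool :=
  if s is x :: s' then path adj x s' && uniq s else false.

Definition injected_through (A : nat -> seq (seq T)) (v : T) (t1 len : nat) : nat :=
  \sum_(t1 <= s < t1 + len) count (fun s => v \in s) (A s).

Definition adversary (R : realFieldType) (adj : rel T) (b : nat) (r : R)
  (A : nat -> seq (seq T)) : Prop :=
  (forall s pth, pth \in A s -> is_route adj pth) /\
  (forall v t1 len, ((injected_through A v t1 len)%:R <= r * len%:R + b%:R)%R).

(* transmission oracle: tx t u = oracle tells u to transmit in round t.
   w hears u in round t iff u is the only neighbour of w transmitting. *)
Definition hears (adj : rel T) (tx : nat -> T -> bool) (t : nat) (u w : T) : bool :=
  [&& adj u w, tx t u & [forall x, (adj x w && tx t x) ==> (x == u)]].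

Definition oracle_TO (adj : rel T) (h : nat) (tx : nat -> T -> bool) : Prop :=
  forall u w, adj u w -> forall t, exists t', t <= t' < t + h /\ hears adj tx t' u w.

Definition tiebreak (tb : rel pkt) : Prop :=
  irreflexive tb /\ transitive tb /\ (forall q q', q != q' -> tb q q' || tb q' q).

(* SIS priority: higher tb q p  <->  q has higher priority than p
   (q has been in the system for a shorter time, ties broken by tb) *)
Definition higher (tb : rel pkt) (q p : pkt) : bool :=
  (pinj p < pinj q) || ((pinj q == pinj p) && tb q p).

(* Execution.  pos t q = index on its path of the node where packet q is,
   at the beginning of round t after the injections of round t
   (meaningful for t >= pinj q).  Packets injected in round s are placed in the
   queue of their source at the beginning of round s.  A packet with
   pos t q < last_idx A q is in the queue of node (nth _ (ppath A q) (pos t q));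
   pos t q = last_idx A q means it has been absorbed at its destination. *)

Definition queued (A : nat -> seq (seq T)) (pos : nat -> pkt -> nat) (t : nat)
  (v : T) (q : pkt) : bool :=
  [&& valid A q, pinj q <= t, pos t q < last_idx A q &
      nth v (ppath A q) (pos t q) == v].

(* under proactive hearing control P: q is eligible at v in round t if q is
   queued at v and its next node hears v in round t *)
Definition eligible (adj : rel T) (tx : nat -> T -> bool) A pos t v q : bool :=
  queued A pos t v q && hears adj tx t v (nth v (ppath A q) (pos t q).+1).

Definition moved (pos : nat -> pkt -> nat) (t : nat) (q : pkt) : Prop :=
  pos t.+1 q = (pos t q).+1.

Definition sis_P_execution (adj : rel T) (tx : nat -> T -> bool)
  (A : nat -> seq (seq T)) (tb : rel pkt) (pos : nat -> pkt -> nat) : Prop :=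
  (forall q, valid A q -> pos (pinj q) q = 0) /\
  (forall q t, valid A q -> pinj q <= t ->
     pos t.+1 q = pos t q \/ moved pos t q) /\
  (forall q t, valid A q -> pinj q <= t -> moved pos t q ->
     exists v, eligible adj tx A pos t v q /\
       forall q', eligible adj tx A pos t v q' -> ~~ higher tb q' q) /\
  (forall t v q, eligible adj tx A pos t v q ->
     exists q', eligible adj tx A pos t v q' /\ moved pos t q').

(* q still requires the queue at v at round t: q is in the system and v is one
   of the nodes on the remaining part of its path where it still has to be
   queued (current node up to, excluding, the destination) *)
Definition requires (A : nat -> seq (seq T)) (pos : nat -> pkt -> nat) (t : nat)
  (q : pkt) (v : T) : bool :=
  [&& valid A q, pinj q <= t, pos t q < last_idx A q &
      v \in drop (pos t q) (take (last_idx A q) (ppath A q))].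

Definition n_higher_requiring (A : nat -> seq (seq T)) (pos : nat -> pkt -> nat)
  (tb : rel pkt) (p : pkt) (t : nat) (v : T) : nat :=
  \sum_(s < t.+1) \sum_(j < size (A s))
     (higher tb (s : nat, j : nat) p && requires A pos t (s : nat, j : nat) v).

(* p arrives at the (j+1)-th node of its path (0-based index j) at round t:
   j = 0: injection round; j > 0: it moved there during round t-1 *)
Definition arrives (A : nat -> seq (seq T)) (pos : nat -> pkt -> nat)
  (p : pkt) (j t : nat) : Prop :=
  pinj p <= t /\ pos t p = j /\
  (t = pinj p \/ (pinj p < t /\ pos t.-1 p < j)).

End Model.

(* kseq b r h i = k_{i+1}:  k_1 = b,  k_{i+1} = (k_i + b) / (1 - r h) *)
Fixpoint kseq (R : realFieldType) (b : nat) (r : R) (h : nat) (i : nat) : R :=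
  match i with
  | 0 => b%:R
  | i'.+1 => ((kseq b r h i' + b%:R) / (1 - r * h%:R))%R
  end.

From mathcomp Require Import all_boot all_order all_algebra.
From mathcomp Require Import zify lra.
Import Order.TTheory GRing.Theory Num.Theory.
Set Implicit Arguments. Unset Strict Implicit.

(* In its injection round, p is outranked under
   SIS only by packets injected in the same round, and at most b packets of one
   round cross v: hence k_1 = b.  For the step, let p reach its j-th node u at
   round t' and wait there w = t - t' rounds.  In every window of h rounds the
   link from u to the next node of p is up, so under proactive hearing control
   some packet leaves u; it is not p, hence it outranks p, and it stops
   requiring u.  Every packet outranking p that requires u already did so at
   round t' (at most k_j - 1 of them) or was injected later (at most r w + b),
   so w/h <= k_j - 1 + r w + b, i.e. w <= k_{j+1} h.  The same count bounds the
   packets outranking p that require v at round t by k_j - 1 + r w + b, which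
   is at most k_{j+1} - 1 because k_{j+1} (1 - r h) = k_j + b. *)

Lemma sum_nth_count (X : Type) (a : pred X) (x0 : X) (s : seq X) :
  \sum_(i < size s) a (nth x0 s i) = count a s.
Proof. by elim: s => [|x s IH]; rewrite ?big_ord0 // big_ord_recl IH. Qed.

Lemma nth_notin_drop (X : eqType) (s : seq X) k x0 :
  uniq s -> k < size s -> nth x0 s k \notin drop k.+1 s.
Proof.
move=> us ks; apply/negP=> hin.
move: us; rewrite -(cat_take_drop k.+1 s) cat_uniq => /and3P[_ /hasPn/(_ _ hin)/negP + _].
apply; rewrite -(nth_take x0 (ltnSn k)); apply: mem_nth.
by rewrite size_take; case: ifP.
Qed.

Lemma leq_sum_windows (F : nat -> nat) t0 h n : 0 < h ->
  (forall a, t0 <= a -> a + h <= t0 + n * h -> exists2 s, a <= s < a + h & 0 < F s) ->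
  n <= \sum_(t0 <= s < t0 + n * h) F s.
Proof.
move=> h0; elim: n => [//|n IH] Hwin.
have eSn : t0 + n.+1 * h = t0 + n * h + h by rewrite mulSn; lia.
rewrite eSn (@big_cat_nat _ _ _ (t0 + n * h)) ?leq_addr //=.
have [s hs Fs] : exists2 s, t0 + n * h <= s < t0 + n * h + h & 0 < F s.
  by apply: Hwin; rewrite ?eSn ?leq_addr.
rewrite -addn1 leq_add ?IH //; last first.
  by rewrite (bigD1_seq s) ?mem_index_iota ?iota_uniq //= (leq_trans Fs) ?leq_addr.
by move=> a ha hah; apply: Hwin; rewrite // eSn (leq_trans hah) ?leq_addr.
Qed.

Lemma leq_ceil_pred (w h : nat) : 0 < h -> 0 < w -> w <= (w.-1 %/ h).+1 * h.
Proof. by move=> h0 w0; rewrite -(prednK w0) ltn_ceil. Qed.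

Lemma ler_nat_add (R : numDomainType) (m n1 n2 : nat) (x1 x2 : R) :
  m <= n1 + n2 -> (n1%:R <= x1)%R -> (n2%:R <= x2)%R -> (m%:R <= x1 + x2)%R.
Proof.
by move=> hm h1 h2; rewrite (le_trans _ (lerD h1 h2)) // -natrD ler_nat.
Qed.

Lemma route_adj (T : finType) (adj : rel T) (s : seq T) (x0 : T) j :
  is_route adj s -> j.+1 < size s -> adj (nth x0 s j) (nth x0 s j.+1).
Proof.
case: s => [|x s] //= /andP[/(pathP x0) adj_s _] hj.
exact: adj_s.
Qed.

Lemma route_uniq (T : finType) (adj : rel T) (A : nat -> seq (seq T)) q :
  (forall s pth, pth \in A s -> is_route adj pth) -> valid A q -> uniq (ppath A q).
Proof.
move=> routes vq; have := routes q.1 _ (mem_nth [::] vq).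
by rewrite /ppath; case: nth => //= x s /andP[].
Qed.

Section Execution.
Variables (T : finType) (A : nat -> seq (seq T)) (pos : nat -> pkt -> nat).

Lemma requires_mem_path t q w : requires A pos t q w -> w \in ppath A q.
Proof. by case/and4P=> _ _ _ /mem_drop/mem_take. Qed.

Lemma queued_inj s u u' q : queued A pos s u q -> queued A pos s u' q -> u = u'.
Proof.
case/and4P=> _ _ lt /eqP <- /and4P[_ _ _ /eqP <-].
by apply: set_nth_default; rewrite (leq_trans lt) // /last_idx leq_pred.
Qed.

Lemma queued_requires s u q : queued A pos s u q -> requires A pos s q u.
Proof.
case/and4P=> vq le lt /eqP hu; apply/and4P; split=> //.
rewrite -{1}hu -(nth_take _ lt) -[pos s q]addn0 -nth_drop addn0.
by apply: mem_nth; rewrite size_drop size_takel ?subn_gt0 // leq_pred.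
Qed.

Lemma moved_not_requires s u q : uniq (ppath A q) ->
  queued A pos s u q -> moved pos s q -> ~~ requires A pos s.+1 q u.
Proof.
move=> uq /and4P[_ _ lt /eqP hu] mv; apply/negP=> /and4P[_ _ _].
rewrite mv -{1}hu -(nth_take _ lt); apply/negP/nth_notin_drop; first exact: take_uniq.
by rewrite size_takel // leq_pred.
Qed.

Hypothesis stay_or_move : forall q t, valid A q -> pinj q <= t ->
  pos t.+1 q = pos t q \/ moved pos t q.

Lemma pos_leS q t : valid A q -> pinj q <= t -> pos t q <= pos t.+1 q.
Proof. by move=> vq le; case: (stay_or_move vq le) => ->. Qed.

Lemma requires_pred t q w : pinj q <= t ->
  requires A pos t.+1 q w -> requires A pos t q w.
Proof.
move=> le /and4P[vq _ lt hin]; have hle := pos_leS vq le.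
apply/and4P; split=> //; first exact: leq_ltn_trans hle lt.
by move: hin; rewrite -(subnK hle) -drop_drop => /mem_drop.
Qed.

Variables (tb : rel pkt) (p : pkt).

Definition n_higher_leaving t w :=
  \sum_(s < t.+1) \sum_(i < size (A s))
     [&& higher tb (s : nat, i : nat) p, requires A pos t (s : nat, i : nat) w
       & ~~ requires A pos t.+1 (s : nat, i : nat) w].

Lemma n_higher_leaving_gt0 t w q : valid A q -> pinj q <= t ->
  [&& higher tb q p, requires A pos t q w & ~~ requires A pos t.+1 q w] ->
  0 < n_higher_leaving t w.
Proof.
case: q => s i vq le hq; rewrite /n_higher_leaving.
rewrite (bigD1 (Ordinal (le : s < t.+1))) //= (bigD1 (Ordinal vq)) //=.
by rewrite hq.
Qed.

Lemma n_higher_requiringS t w :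
  n_higher_requiring A pos tb p t.+1 w + n_higher_leaving t w <=
  n_higher_requiring A pos tb p t w + count (fun l => w \in l) (A t.+1).
Proof.
rewrite /n_higher_requiring big_ord_recr /= addnAC leq_add //.
  rewrite -big_split leq_sum // => s _; rewrite -big_split leq_sum // => i _ /=.
  have := @requires_pred t (s : nat, i : nat) w (ltn_ord s).
  by case: requires; case: requires; case: higher => // /(_ isT).
rewrite -(sum_nth_count _ [::]) leq_sum // => i _.
case/boolP: (requires A pos t.+1 (t.+1, i : nat) w) => [/requires_mem_path|];
  by rewrite ?andbF // /ppath => ->; rewrite andbT leq_b1.
Qed.

Lemma n_higher_requiring_window t0 d w :
  n_higher_requiring A pos tb p (t0 + d) w + \sum_(t0 <= s < t0 + d) n_higher_leaving s w <=
  n_higher_requiring A pos tb p t0 w + injected_through A w t0.+1 d.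
Proof.
elim: d => [|d IH]; first by rewrite !addn0 /injected_through !big_geq ?addn0.
move: IH; rewrite /injected_through !addSn addnS.
rewrite (@big_nat_recr _ _ _ (t0 + d).+1 t0.+1) ?ltnS ?leq_addr //=.
rewrite (@big_nat_recr _ _ _ (t0 + d) t0) ?leq_addr //=.
have := n_higher_requiringS (t0 + d) w.
set injected_last := count _ (A (t0 + d).+1); lia.
Qed.

End Execution.

Section Arrival.
Variables (T : finType) (A : nat -> seq (seq T)) (pos : nat -> pkt -> nat) (p : pkt).
Hypothesis pos_inj : pos (pinj p) p = 0.
Hypothesis stay_or_move : forall t, pinj p <= t -> pos t.+1 p = pos t p \/ moved pos t p.

Lemma arrives_last s : pinj p <= s -> exists t',
  [/\ t' <= s, arrives A pos p (pos s p) t' & forall x, t' <= x <= s -> pos x p = pos s p].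
Proof.
elim: s => [|s IH] hs.
  have e0 : pinj p = 0 by lia.
  exists 0; split=> // [|x]; last by rewrite leqn0 => /eqP->.
  by rewrite /arrives e0; split; [|split; [|left]].
have [<-|ne] := eqVneq (pinj p) s.+1.
  exists (pinj p); split=> // [|x hx]; last by have -> : x = pinj p by lia.
  by split=> //; split=> //; left.
have le : pinj p <= s by lia.
case: (stay_or_move le) => [e|mv].
  have [t' [ht' arr hc]] := IH le; rewrite e; exists t'; split=> //; first lia.
  move=> x /andP[hx]; rewrite leq_eqVlt ltnS => /orP[/eqP-> // | hxs].
  by apply: hc; rewrite hx hxs.
exists s.+1; split=> // [|x hx]; last by have -> : x = s.+1 by lia.
by split=> //; split=> //; right; split; [lia | rewrite /= mv].
Qed.

Lemma arrives_prev j t : arrives A pos p j.+1 t ->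
  exists t', [/\ t' < t, arrives A pos p j t' & forall x, t' <= x < t -> pos x p = j].
Proof.
case=> _ [hpos [et|[lt prev]]]; first by rewrite et pos_inj in hpos.
have le : pinj p <= t.-1 by lia.
have ht : t = t.-1.+1 by lia.
have hj : pos t.-1 p = j.
  by case: (stay_or_move le); rewrite /moved -ht hpos => e; move: prev; lia.
have [t' [ht' arr hc]] := arrives_last le; rewrite hj in arr hc.
exists t'; split=> // [|x /andP[hx hxt]]; first lia.
by apply: hc; rewrite hx -ltnS -ht.
Qed.

End Arrival.

Lemma higher_total tb q p : tiebreak tb -> q != p -> higher tb q p || higher tb p q.
Proof.
case=> _ [_ tot] qp; rewrite /higher.
by case: (ltngtP (pinj p) (pinj q)) => //= _; exact: tot.
Qed.

Lemma count_injected_le (R : realFieldType) (T : finType) (A : nat -> seq (seq T))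
    (b : nat) (r : R) v s :
  (r < 1)%R -> ((injected_through A v s 1)%:R <= r * 1%:R + b%:R)%R ->
  count (fun l => v \in l) (A s) <= b.
Proof.
rewrite /injected_through addn1 big_nat1 mulr1 => r1 hinj.
by rewrite -ltnS -(ltr_nat R) -addn1 natrD; lra.
Qed.

Section SIS.
Variables (T : finType) (adj : rel T) (tx : nat -> T -> bool) (A : nat -> seq (seq T)).
Variables (tb : rel pkt) (pos : nat -> pkt -> nat).
Hypothesis routes : forall s pth, pth \in A s -> is_route adj pth.
Hypothesis tie : tiebreak tb.

Lemma n_higher_requiring_at_injection p v : valid A p -> v \in ppath A p ->
  (n_higher_requiring A pos tb p (pinj p) v).+1 <= count (fun l => v \in l) (A (pinj p)).
Proof.
case: p => s0 i0 vp hv; rewrite /n_higher_requiring big_ord_recr /= big1 ?add0n; last first.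
  move=> s _; apply: big1 => i _; have hs := ltn_ord s.
  by rewrite /higher /pinj /= ltnNge (ltnW hs) /= (ltn_eqF hs).
rewrite -(sum_nth_count _ [::]) (bigD1 (Ordinal vp)) //= [X in _ <= X](bigD1 (Ordinal vp)) //=.
have [irr _] := tie.
rewrite /higher /pinj /= ltnn eqxx irr; move: hv; rewrite /ppath /= => -> /=.
rewrite add0n add1n ltnS leq_sum // => i _.
case/boolP: (requires A pos s0 (s0, nat_of_ord i) v) => [/requires_mem_path|];
  by rewrite ?andbF // /ppath => ->; rewrite andbT leq_b1.
Qed.

Hypothesis pos_select : forall q t, valid A q -> pinj q <= t -> moved pos t q ->
  exists v, eligible adj tx A pos t v q /\
    forall q', eligible adj tx A pos t v q' -> ~~ higher tb q' q.
Hypothesis pos_progress : forall t v q, eligible adj tx A pos t v q ->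
  exists q', eligible adj tx A pos t v q' /\ moved pos t q'.

Lemma n_higher_leaving_blocked p s u : queued A pos s u p -> pos s.+1 p = pos s p ->
  hears adj tx s u (nth u (ppath A p) (pos s p).+1) ->
  0 < n_higher_leaving A pos tb p s u.
Proof.
move=> qp stay hear.
have ep : eligible adj tx A pos s u p by rewrite /eligible qp.
have [q' [eq' mq']] := pos_progress ep.
have qq' : queued A pos s u q' by case/andP: eq'.
have /and4P[vq' lq' _ _] := qq'.
have [u' [eu' nohigher]] := pos_select vq' lq' mq'.
have eu : u' = u by apply: queued_inj qq'; case/andP: eu'.
rewrite eu in nohigher.
have q'p : q' != p by apply/eqP=> e; move: mq'; rewrite e /moved stay => /n_Sn.
have hq : higher tb q' p.
  by case/orP: (higher_total tie q'p) => // hpq; move: (nohigher p ep); rewrite hpq.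
apply: (n_higher_leaving_gt0 vq' lq').
by rewrite hq queued_requires //= moved_not_requires // (route_uniq routes).
Qed.

Lemma n_higher_leaving_while_waiting h p j t' t (x0 : T) :
  0 < h -> oracle_TO adj h tx -> valid A p -> pinj p <= t' ->
  j.+1 < size (ppath A p) -> t' < t -> (forall x, t' <= x < t -> pos x p = j) ->
  (t - t').-1 %/ h <= \sum_(t' <= s < t) n_higher_leaving A pos tb p s (nth x0 (ppath A p) j).
Proof.
move=> h0 oracle vp hp hj ltt stay.
have := leq_trunc_div (t - t').-1 h; move: (_ %/ h) => n hnh.
have hn : t' + n * h < t by rewrite -ltn_subRL (leq_ltn_trans hnh) // ltn_predL subn_gt0.
rewrite (@big_cat_nat _ _ _ (t' + n * h)) ?leq_addr ?(ltnW hn) //=.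
apply: leq_trans (leq_addr _ _); apply: leq_sum_windows => // a ha hah.
set u := nth x0 (ppath A p) j.
have [s [/andP[hsa hsb] hear]] := oracle _ _ (route_adj x0 (routes (mem_nth [::] vp)) hj) a.
exists s; first by rewrite hsa hsb.
have hts : t' <= s := leq_trans ha hsa.
have hst : s.+1 < t := leq_ltn_trans (leq_trans hsb hah) hn.
have posS : pos s p = j by apply: stay; rewrite hts ltnW.
have posS1 : pos s.+1 p = j by apply: stay; rewrite (leq_trans hts) ?hst.
have hju : nth u (ppath A p) j = u by apply: set_nth_default; exact: ltnW.
apply: n_higher_leaving_blocked; rewrite ?posS ?posS1 //; last first.
  by rewrite (set_nth_default x0).
apply/and4P; split; rewrite ?posS ?hju ?(leq_trans hp hts) //.
by rewrite /last_idx -ltnS prednK // (leq_ltn_trans _ hj).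
Qed.

End SIS.

Section KseqBounds.
Variables (R : realFieldType) (b h : nat) (r : R).
Hypotheses (r_ge0 : (0 <= r)%R) (rh_lt1 : (r * h%:R < 1)%R).
Local Open Scope ring_scope.

Lemma kseqS_mul j : kseq b r h j.+1 * (1 - r * h%:R) = kseq b r h j + b%:R.
Proof. by rewrite /= divfK // gt_eqF // subr_gt0. Qed.

Lemma kseqS_bound j (w n m : nat) : (w <= n.+1 * h)%N ->
  n%:R <= kseq b r h j - 1 + (r * w%:R + b%:R) ->
  m%:R <= kseq b r h j - 1 + (r * w%:R + b%:R) ->
  m%:R <= kseq b r h j.+1 - 1.
Proof.
move=> hw hn hm; have eK := kseqS_mul j.
move: (kseq b r h j.+1) (kseq b r h j) eK hn hm => K k eK hn hm.
have hwR : w%:R <= (n%:R + 1) * h%:R :> R by rewrite natr1 -natrM ler_nat.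
have hc : 0 < 1 - r * h%:R by rewrite subr_gt0.
have hnh : (n%:R + 1) * h%:R <= (k + r * w%:R + b%:R) * h%:R.
  by rewrite ler_wpM2r //; lra.
have hwK : w%:R <= K * h%:R.
  rewrite -(ler_pM2r hc) mulrAC eK; nra.
have : r * w%:R <= r * (K * h%:R) by rewrite ler_wpM2l.
nra.
Qed.

End KseqBounds.

Theorem lemma4 (R : realFieldType) (T : finType) (adj : rel T) (h b : nat) (r : R)
  (tx : nat -> T -> bool) (A : nat -> seq (seq T)) (tb : rel pkt)
  (pos : nat -> pkt -> nat) :
  simple_graph adj -> (0 < h)%N -> (0 < b)%N ->
  (0 <= r)%R -> (r * h%:R < 1)%R ->
  oracle_TO adj h tx -> adversary adj b r A -> tiebreak tb ->
  sis_P_execution adj tx A tb pos ->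
  forall (p : pkt) (j t : nat),
    valid A p -> (j.+1 < size (ppath A p))%N -> arrives A pos p j t ->
    forall v, v \in ppath A p ->
      ((n_higher_requiring A pos tb p t v)%:R <= kseq b r h j - 1)%R.
Proof.
move=> _ h0 _ r0 rh1 oracle [routes inj_bound] tie [pos_inj [stay [select progress]]] p j t vp.
elim: j t => [|j IH] t hj arr v hv.
  have h1 : (1 <= h%:R :> R)%R by rewrite ler1n.
  have r1 : (r < 1)%R by nra.
  have -> : t = pinj p by case: arr => _ [_ [->|[_ //]]].
  rewrite lerBrDr natr1 ler_nat (leq_trans (n_higher_requiring_at_injection pos tie vp hv)) //.
  exact: count_injected_le r1 (inj_bound v _ 1).
have [t' [ltt arr' at_j]] := arrives_prev (pos_inj p vp) (stay p ^~ vp) arr.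
have hp' : pinj p <= t' by case: arr'.
have hj' : j.+1 < size (ppath A p) by exact: ltnW.
have hleave := n_higher_leaving_while_waiting routes tie select progress v h0 oracle vp hp' hj' ltt at_j.
set u := nth v (ppath A p) j in hleave.
have hu : u \in ppath A p by apply: mem_nth; exact: ltnW hj'.
have win_u := n_higher_requiring_window stay tb p t' (t - t') u.
have win_v := n_higher_requiring_window stay tb p t' (t - t') v.
rewrite (subnKC (ltnW ltt)) in win_u win_v.
have w0 : 0 < t - t' by rewrite subn_gt0.
apply: (kseqS_bound r0 rh1 (leq_ceil_pred h0 w0)).
  apply: ler_nat_add (IH t' hj' arr' u hu) (inj_bound u t'.+1 (t - t')).
  exact: leq_trans hleave (leq_trans (leq_addl _ _) win_u).
apply: ler_nat_add (IH t' hj' arr' v hv) (inj_bound v t'.+1 (t - t')).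
exact: leq_trans (leq_addr _ _) win_v.
Qed.
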